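(* Let $\theta^*\in\mathbb{R}^d$ with $\|\theta^*\|_2=\sqrt{d}$ and $\sigma>0$, and let $(x^L,y^L)$ be drawn from the $(\theta^*,\sigma)$-Gaussian mixture model. Suppose $v\in\mathbb{R}^d$ is a (fixed) unit vector such that $\big\|v-\frac{\theta^*}{\sqrt{d}}\big\|_2\le\tau$ for some constant $\tau<\sqrt{2}$. Then with probability at least $1-\exp\!\Big(-\frac{d(1-\frac{\tau^2}{2})^2}{2\sigma^2}\Big)$, we have $\mathrm{sign}(y^L\cdot v^\top x^L)\,v^\top\theta^*>0$.
   Context: The $(\theta^*,\sigma)$-Gaussian mixture model is the distribution on $\mathbb{R}^d\times\{\pm1\}$ obtained by drawing $y\in\{\pm1\}$ uniformly at random and then $x\sim\mathcal{N}(y\theta^*,\sigma^2 I_d)$. *)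

From HB Require Import structures.
From mathcomp Require Import all_boot all_order all_algebra.
From mathcomp Require Import all_classical all_reals all_analysis.
Set Implicit Arguments. Unset Strict Implicit. Unset Printing Implicit Defensive.
Import Order.TTheory GRing.Theory Num.Theory.
Local Open Scope classical_set_scope.
Local Open Scope ring_scope.

Definition l2norm (R : realType) (d : nat) (u : 'I_d -> R) : R :=
  Num.sqrt (\sum_(i < d) u i ^+ 2).

Definition dotp (R : realType) (d : nat) (u w : 'I_d -> R) : R :=
  \sum_(i < d) u i * w i.

(* (x, y) : (random vector in R^d, random label) defined on the probability
   space (T, P) is distributed according to the (theta, sigma)-Gaussian
   mixture model: y is uniform on {+1,-1} and, conditionally on y,
   x ~ N(y theta, sigma^2 I_d), i.e. the coordinates of x are independent
   with x_i ~ N(y theta_i, sigma^2).  This is stated as the exact joint law on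
   all measurable rectangles (which determines the joint distribution):
     P(y = y0, x_i in A_i for all i) = 1/2 * prod_i N(y0 theta_i, sigma^2)(A_i)
   for y0 in {+1,-1}.  (Taking A_i = R gives P(y = 1) = P(y = -1) = 1/2.) *)
Definition gaussian_mixture (R : realType) (dT : measure_display)
    (T : measurableType dT) (P : probability T R) (d : nat)
    (theta : 'I_d -> R) (sigma : R)
    (x : 'I_d -> {RV P >-> R}) (y : {RV P >-> R}) : Prop :=
  forall (y0 : R) (A : 'I_d -> set R),
    (y0 = 1 \/ y0 = -1) ->
    (forall i, measurable (A i)) ->
    P (y @^-1` [set y0] `&` \bigcap_(i in [set: 'I_d]) (x i @^-1` A i)) =
      ((2%:R)^-1%:E * \prod_(i < d) normal_prob (y0 * theta i) sigma (A i))%E.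
Arguments gaussian_mixture {R dT T} P {d} theta sigma x y.

From HB Require Import structures.
From mathcomp Require Import all_boot all_order all_algebra.
From mathcomp Require Import all_classical all_reals all_analysis.
From mathcomp Require Import measurable_realfun.
From mathcomp Require Import ring lra.
Import Order.TTheory GRing.Theory Num.Theory.
Local Open Scope classical_set_scope.
Local Open Scope ring_scope.

(* Conditionally on y = y0 the coordinates of x are independent N(y0 theta_i, sigma^2),
   so E[exp <a, x>; y = y0] = exp (y0 <a, theta> + sigma^2 |a|^2 / 2) / 2.  This
   follows from the product formula defining the model by replacing its indicators
   by arbitrary nonnegative test functions, one coordinate at a time.  A Chernoff
   bound with lambda = mu / sigma^2, where mu = <v, theta>, then gives
   P(y = y0, y0 <v, x> <= 0) <= exp (- mu^2 / (2 sigma^2)) / 2.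
   Since |v| = 1 and |theta| = sqrt d, |v - theta / sqrt d|^2 = 2 - 2 mu / sqrt d,
   so mu >= sqrt d (1 - tau^2 / 2) > 0: the event of the theorem is y <v, x> > 0,
   and its complement splits over the two labels. *)

(* Q is the image under X of the measure with density h on D. *)
Section ge0_integral_transfer.
Context {d d'} {T : measurableType d} {U : measurableType d'} {R : realType}.
Context {P : {measure set T -> \bar R}} {Q : {measure set U -> \bar R}}.
Context {D : set T} {X : T -> U} {h : T -> R}.
Hypotheses (mD : measurable D) (mX : measurable_fun D X) (mh : measurable_fun D h).
Hypothesis h_ge0 : forall w, D w -> 0 <= h w.
Hypothesis integral_indic_transfer : forall B, measurable B ->
  (\int[P]_(w in D) (\1_B (X w) * h w)%:E = Q B)%E.
Local Open Scope ereal_scope.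
Import HBNNSimple.

Lemma integral_transfer_nnsfun (s : {nnsfun U >-> R}) :
  \int[P]_(w in D) (s (X w) * h w)%:E = \int[Q]_t (s t)%:E.
Proof.
have indic_ge0 r t : (0 <= r * \1_(s @^-1` [set r]) t)%R.
  by rewrite -lee_fin EFinM nnfun_muleindic_ge0.
have sXh_sum w : (s (X w) * h w)%:E =
    \sum_(r \in range s) r%:E * (\1_(s @^-1` [set r]) (X w) * h w)%:E.
  rewrite EFinM fimfunE -fsumEFin// ge0_mule_fsuml => [|r]; last by rewrite lee_fin.
  by apply: eq_fsbigr => r _; rewrite -!EFinM mulrA.
under eq_integral do rewrite sXh_sum.
rewrite integralT_nnsfun sintegralE ge0_integral_fsum//; last 2 first.
- move=> r; apply/measurable_EFinP/measurable_funM => //.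
  by apply: measurable_funM => //; exact: measurableT_comp.
- by move=> r w Dw; rewrite -EFinM lee_fin mulrA mulr_ge0// h_ge0.
apply: eq_fsbigr => r /[!inE] -[t _ <-].
rewrite ge0_integralZl ?integral_indic_transfer ?lee_fin//.
- apply/measurable_EFinP/measurable_funM => //; exact: measurableT_comp.
- by move=> w Dw; rewrite lee_fin mulr_ge0// h_ge0.
Qed.

Lemma ge0_integral_transfer (g : U -> R) :
  measurable_fun setT g -> (forall t, (0 <= g t)%R) ->
  \int[P]_(w in D) (g (X w) * h w)%:E = \int[Q]_t (g t)%:E.
Proof.
move=> mg g_ge0.
have mEg : measurable_fun setT (EFin \o g) by exact/measurable_EFinP.
pose s := nnsfun_approx measurableT mEg.
have s_cvg t : (EFin \o s^~ t) @ \oo --> (g t)%:E.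
  by apply: cvg_nnsfun_approx => // x _; rewrite lee_fin.
have s_nd t : nondecreasing_seq (s^~ t).
  by move=> m n mn; exact/lefP/nd_nnsfun_approx.
transitivity (limn (fun n => \int[P]_(w in D) (s n (X w) * h w)%:E)).
  rewrite -monotone_convergence//.
  - apply: eq_integral => w /[!inE] Dw; apply/esym/cvg_lim => //.
    under eq_fun do rewrite EFinM.
    by rewrite EFinM; apply: cvgeZr => //; exact: s_cvg.
  - move=> n; apply/measurable_EFinP/measurable_funM => //.
    exact: measurableT_comp.
  - by move=> n w Dw; rewrite lee_fin mulr_ge0// h_ge0.
  - by move=> w Dw m n mn; rewrite lee_fin ler_wpM2r ?h_ge0//; exact: s_nd.
have -> : (fun n => \int[P]_(w in D) (s n (X w) * h w)%:E) =
    (fun n => \int[Q]_t (s n t)%:E).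
  by apply/funext => n; exact: integral_transfer_nnsfun.
rewrite -monotone_convergence//.
- by apply: eq_integral => t _; apply/cvg_lim => //; exact: s_cvg.
- by move=> n; exact/measurable_EFinP.
- by move=> n t _; rewrite lee_fin.
- by move=> t _ m n mn; rewrite lee_fin; exact: s_nd.
Qed.

End ge0_integral_transfer.

Section normal_mgf.
Context {R : realType}.
Local Open Scope ereal_scope.

Lemma normal_pdf_tilt (m s a t : R) : s != 0%R ->
  (expR (a * t) * normal_pdf m s t =
   expR (a * m + a ^+ 2 * s ^+ 2 / 2) * normal_pdf (m + a * s ^+ 2) s t)%R.
Proof.
move=> s0; rewrite /normal_pdf (negbTE s0) /normal_fun mulrCA [RHS]mulrCA.
by congr (_ * _)%R; rewrite -!expRD; congr expR; field.
Qed.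

Lemma integral_normal_prob (m s : R) (g : R -> R) :
  measurable_fun setT g -> (forall t, (0 <= g t)%R) ->
  \int[normal_prob m s]_t (g t)%:E =
  \int[lebesgue_measure]_t (g t * normal_pdf m s t)%:E.
Proof.
move=> mg g_ge0; apply/esym/(ge0_integral_transfer (D := setT) (X := id)) => //.
- exact: measurable_normal_pdf.
- by move=> t _; exact: normal_pdf_ge0.
move=> B mB; rewrite /normal_prob [RHS]integral_mkcond; apply: eq_integral => t _.
by rewrite /patch indicE; case: ifPn => _; rewrite ?mul1r ?mul0r.
Qed.

Lemma normal_mgf (m s a : R) : s != 0%R ->
  \int[normal_prob m s]_t (expR (a * t))%:E =
  (expR (a * m + a ^+ 2 * s ^+ 2 / 2))%:E.
Proof.
move=> s0; rewrite integral_normal_prob//; last exact: measurableT_comp.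
under eq_integral do rewrite normal_pdf_tilt// EFinM.
by rewrite integralZl ?integral_normal_pdf ?mule1//; exact: integrable_normal_pdf.
Qed.

End normal_mgf.

Lemma prod_indic {T : Type} {R : realType} {I : finType} (A : I -> set T) (t : T) :
  \prod_i \1_(A i) t = \1_(\bigcap_(i in [set: I]) A i) t :> R.
Proof.
rewrite [RHS]indicE; case: (boolP (t \in _)) => [/set_mem tA | tNA].
  by rewrite big1// => i _; rewrite indicE mem_set//; exact: tA.
have [i tNAi] : exists i, ~ A i t.
  by apply/existsNP => tA; move/negP: tNA; apply; apply/mem_set => i _.
by rewrite (bigD1 i)//= indicE memNset// mul0r.
Qed.

Lemma measurable_dotp {R : realType} {dT} {T : measurableType dT} {d : nat}
    (v : 'I_d -> R) (x : 'I_d -> T -> R) :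
  (forall i, measurable_fun setT (x i)) ->
  measurable_fun setT (fun w => dotp v (fun i => x i w)).
Proof. by move=> mx; apply: measurable_sum => i; exact: measurable_funM. Qed.

Lemma dotpZl {R : realType} {d : nat} (c : R) (u w : 'I_d -> R) :
  dotp (fun i => c * u i) w = c * dotp u w.
Proof. by rewrite /dotp mulr_sumr; apply: eq_bigr => i _; rewrite mulrA. Qed.

Section l2_geometry.
Context {R : realType} {d : nat}.
Implicit Types u v theta : 'I_d -> R.

Lemma sqr_l2norm u : l2norm u ^+ 2 = \sum_i u i ^+ 2.
Proof. by rewrite sqr_sqrtr// sumr_ge0// => i _; exact: sqr_ge0. Qed.

Lemma l2norm_eq1_dim_gt0 v : l2norm v = 1 -> (0 < d)%N.
Proof.
move=> v_norm; rewrite lt0n; apply/eqP => d0; move: v v_norm; rewrite d0 => v.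
by rewrite /l2norm big_ord0 sqrtr0 => /eqP; rewrite eq_sym oner_eq0.
Qed.

Lemma dotp_ge_l2norm_dist theta v (tau : R) :
  l2norm theta = Num.sqrt d%:R -> l2norm v = 1 ->
  l2norm (fun i => v i - theta i / Num.sqrt d%:R) <= tau ->
  Num.sqrt d%:R * (1 - tau ^+ 2 / 2) <= dotp v theta.
Proof.
move=> theta_norm v_norm dist_le; set s := Num.sqrt d%:R.
have d_gt0 : 0 < d%:R :> R by rewrite ltr0n (l2norm_eq1_dim_gt0 _ v_norm).
have s_gt0 : 0 < s by rewrite sqrtr_gt0.
have dist_sqr : \sum_i (v i - theta i / s) ^+ 2 = 2 - 2 * dotp v theta / s.
  transitivity (\sum_i v i ^+ 2 + s^-2 * \sum_i theta i ^+ 2 - 2 / s * dotp v theta).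
    rewrite /dotp !mulr_sumr -big_split -sumrB; apply: eq_bigr => i _.
    by rewrite /=; field; rewrite gt_eqF.
  by rewrite -!sqr_l2norm theta_norm v_norm sqr_sqrtr ?ltW//; field; rewrite !gt_eqF.
have : \sum_i (v i - theta i / s) ^+ 2 <= tau ^+ 2.
  rewrite -sqr_l2norm lerXn2r ?nnegrE ?sqrtr_ge0//; exact: le_trans (sqrtr_ge0 _) dist_le.
rewrite dist_sqr => /(ler_wpM2r (ltW s_gt0)); rewrite mulrBl divfK ?gt_eqF//.
nra.
Qed.

End l2_geometry.

Section gaussian_mixture.
Context {R : realType} {dT : measure_display} {T : measurableType dT}
  {P : probability T R} {d : nat} {theta : 'I_d -> R} {sigma : R}
  {x : 'I_d -> {RV P >-> R}} {y : {RV P >-> R}}.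
Hypothesis GM : gaussian_mixture P theta sigma x y.

Section conditional_on_label.
Context {y0 : R}.
Hypothesis y0_sign : y0 = 1 \/ y0 = -1.
Local Notation F := (y @^-1` [set y0]).
Local Notation N i := (normal_prob (y0 * theta i) sigma).
Local Open Scope ereal_scope.

Let mF : measurable F.
Proof. by rewrite -[_ @^-1` _]setTI; exact: measurable_funPT. Qed.

Let mx i : measurable_fun F (x i).
Proof. exact/measurable_funTS/measurable_funPT. Qed.

Lemma gaussian_mixture_label : P F = 2^-1%:E.
Proof.
have -> : F = F `&` \bigcap_(i in [set: 'I_d]) (x i @^-1` setT).
  by apply/seteqP; split => [w Fw|w []//]; split.
rewrite (GM y0 (fun=> setT) y0_sign (fun=> measurableT)).
by rewrite big1 ?mule1// => i _; exact: probability_setT.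
Qed.

Lemma gaussian_mixture_indic (A : 'I_d -> set R) : (forall i, measurable (A i)) ->
  \int[P]_(w in F) (\prod_i \1_(A i) (x i w))%:E =
  (2^-1 * \prod_i fine (N i (A i)))%:E.
Proof.
move=> mA; have mxA : measurable (\bigcap_(i in [set: 'I_d]) (x i @^-1` A i)).
  apply: fin_bigcap_measurable => // i _.
  by rewrite -[_ @^-1` _]setTI; exact: measurable_funPT.
under eq_integral => w _ do rewrite (prod_indic (fun i => x i @^-1` A i) w).
rewrite integral_indic// setIC; apply: eq_trans (GM y0 A y0_sign mA) _.
rewrite EFinM -prodEFin; congr (_ * _).
by apply: eq_bigr => i _; rewrite fineK//; apply: fin_num_measure; exact: mA.
Qed.

Section product_moment.
Context {g : 'I_d -> R -> R} {G : 'I_d -> R}.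
Hypothesis mg : forall i, measurable_fun setT (g i).
Hypothesis g_ge0 : forall i t, (0 <= g i t)%R.
Hypothesis integral_g : forall i, \int[N i]_t (g i t)%:E = (G i)%:E.

Let G_ge0 i : (0 <= G i)%R.
Proof. by rewrite -lee_fin -integral_g; apply: integral_ge0 => t _; rewrite lee_fin. Qed.

Let phi (s : seq 'I_d) (A : 'I_d -> set R) i : R -> R :=
  if i \in s then g i else \1_(A i).
Let psi (s : seq 'I_d) (A : 'I_d -> set R) i : R :=
  if i \in s then G i else fine (N i (A i)).

(* Quantifying over A lets the induction step give the newly replaced coordinate
   an arbitrary set B, which identifies the law of that coordinate. *)
Let factorization s := forall A, (forall i, measurable (A i)) ->
  \int[P]_(w in F) (\prod_i phi s A i (x i w))%:E = (2^-1 * \prod_i psi s A i)%:E.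

Let phi_ge0 s A i t : (0 <= phi s A i t)%R.
Proof. by rewrite /phi; case: ifP. Qed.

Let psi_ge0 s A i : (0 <= psi s A i)%R.
Proof. by rewrite /psi; case: ifP => _ //; exact/fine_ge0/measure_ge0. Qed.

Let measurable_phi s A i : measurable (A i) ->
  measurable_fun F (fun w => phi s A i (x i w)).
Proof. by move=> mAi; rewrite /phi; case: ifP => _; exact: measurableT_comp. Qed.

Let rest j s A w := (\prod_(i | i != j) phi (j :: s) A i (x i w))%R.
Let rest_mass j s A := (2^-1 * \prod_(i | i != j) psi (j :: s) A i)%R.

Let rest_mass_ge0 j s A : (0 <= rest_mass j s A)%R.
Proof. by rewrite mulr_ge0// prodr_ge0. Qed.

Let measurable_rest j s {A} : (forall i, measurable (A i)) ->
  measurable_fun F (rest j s A).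
Proof.
move=> mA; rewrite /rest; under eq_fun do rewrite big_mkcond /=.
by apply: measurable_prod => i _; case: (i != j) => //; exact: measurable_phi.
Qed.

Let factorization_cons_indic {j s A B} : j \notin s -> factorization s ->
  (forall i, measurable (A i)) -> measurable B ->
  \int[P]_(w in F) (\1_B (x j w) * rest j s A w)%:E = (rest_mass j s A)%:E * N j B.
Proof.
move=> js IH mA mB; pose A' i := if i == j then B else A i.
have mA' i : measurable (A' i) by rewrite /A'; case: ifP.
have phi_A' i : i != j -> phi s A' i = phi (j :: s) A i.
  by move=> ij; rewrite /phi /A' in_cons (negbTE ij).
have psi_A' i : i != j -> psi s A' i = psi (j :: s) A i.
  by move=> ij; rewrite /psi /A' in_cons (negbTE ij).
have phi_split w : (\prod_i phi s A' i (x i w) = \1_B (x j w) * rest j s A w)%R.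
  rewrite (bigD1 j)//= {1}/phi (negbTE js) /A' eqxx; congr (_ * _)%R.
  by apply: eq_bigr => i ij; rewrite phi_A'.
have psi_split :
    (\prod_i psi s A' i = fine (N j B) * \prod_(i | i != j) psi (j :: s) A i)%R.
  rewrite (bigD1 j)//= {1}/psi (negbTE js) /A' eqxx; congr (_ * _)%R.
  by apply: eq_bigr => i ij; rewrite psi_A'.
under eq_integral do rewrite -phi_split.
rewrite IH// psi_split -[in RHS](@fineK _ (N j B)); last exact: fin_num_measure.
by rewrite -EFinM /rest_mass; congr EFin; ring.
Qed.

Let factorization_cons j s : j \notin s -> factorization s -> factorization (j :: s).
Proof.
move=> js IH A mA.
have rest_ge0 w : F w -> (0 <= rest j s A w)%R by move=> _; exact: prodr_ge0.
have := ge0_integral_transfer (Q := mscale (NngNum (rest_mass_ge0 j s A)) (N j))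
  mF (mx j) (measurable_rest j s mA) rest_ge0
  (fun B => factorization_cons_indic js IH mA) _ (mg j) (g_ge0 j).
rewrite ge0_integral_mscale//; last 2 first.
- by apply/measurable_EFinP; exact: mg.
- by move=> t _; rewrite lee_fin.
rewrite integral_g /= => transfer.
have phi_split w : (\prod_i phi (j :: s) A i (x i w) = g j (x j w) * rest j s A w)%R.
  by rewrite (bigD1 j)//= {1}/phi mem_head.
have psi_split :
    (\prod_i psi (j :: s) A i = G j * \prod_(i | i != j) psi (j :: s) A i)%R.
  by rewrite (bigD1 j)//= {1}/psi mem_head.
under eq_integral do rewrite phi_split.
by rewrite transfer psi_split /rest_mass -EFinM; congr EFin; ring.
Qed.

Lemma gaussian_mixture_factor :
  \int[P]_(w in F) (\prod_i g i (x i w))%:E = (2^-1 * \prod_i G i)%:E.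
Proof.
have factorization_uniq s : uniq s -> factorization s.
  elim: s => [_|j s IH /andP[js /IH]]; last exact: factorization_cons.
  exact: gaussian_mixture_indic.
have := factorization_uniq _ (enum_uniq 'I_d) (fun=> setT) (fun=> measurableT).
rewrite /phi /psi.
under eq_integral do under eq_bigr do rewrite mem_enum.
by under eq_bigr do rewrite mem_enum.
Qed.
End product_moment.

Lemma gaussian_mixture_mgf (a : 'I_d -> R) : sigma != 0%R ->
  \int[P]_(w in F) (expR (dotp a (fun i => x i w)))%:E =
  (2^-1 * expR (y0 * dotp a theta + sigma ^+ 2 / 2 * \sum_i a i ^+ 2))%:E.
Proof.
move=> sigma_neq0.
have mgf i := normal_mgf (y0 * theta i)%R sigma (a i) sigma_neq0.
have mexp i : measurable_fun setT (fun t : R => expR (a i * t)).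
  exact: measurableT_comp.
under eq_integral do rewrite expR_sum.
rewrite (gaussian_mixture_factor mexp (fun i t => expR_ge0 _) mgf) -expR_sum.
congr (_ * expR _)%R%:E; rewrite big_split /= /dotp !mulr_sumr.
by congr (_ + _)%R; apply: eq_bigr => i _; ring.
Qed.

Lemma gaussian_mixture_tail (v : 'I_d -> R) :
  (\sum_i v i ^+ 2 = 1)%R -> (0 < sigma)%R -> (0 <= dotp v theta)%R ->
  P (F `&` [set w | y0 * dotp v (fun i => x i w) <= 0]%R) <=
  (2^-1 * expR (- dotp v theta ^+ 2 / (2 * sigma ^+ 2)))%:E.
Proof.
move=> v_unit sigma_gt0 mu_ge0; set mu := dotp v theta.
set lam := (mu / sigma ^+ 2)%R.
have lam_ge0 : (0 <= lam)%R by rewrite divr_ge0// sqr_ge0.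
(* On the event, exp (- lam y0 <v, x>) >= 1; lam = mu / sigma^2 optimizes the bound. *)
pose a i := (- (lam * y0) * v i)%R.
have mdotp u : measurable_fun setT (fun w => dotp u (fun i => x i w)).
  by apply: measurable_dotp => i; exact: measurable_funPT.
have mBad : measurable [set w | y0 * dotp v (fun i => x i w) <= 0]%R.
  rewrite -[X in measurable X]setTI; apply: measurable_fun_le => //.
  exact: measurable_funM.
have <- : (y0 * dotp a theta + sigma ^+ 2 / 2 * \sum_i a i ^+ 2 =
    - mu ^+ 2 / (2 * sigma ^+ 2))%R.
  rewrite dotpZl -/mu; under eq_bigr do rewrite exprMn.
  by rewrite -mulr_sumr v_unit /lam; case: y0_sign => ->; field; rewrite gt_eqF.
rewrite -(gaussian_mixture_mgf a) ?gt_eqF// setIC -integral_indic//.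
apply: ge0_le_integral => //.
- exact/measurable_EFinP/measurable_funTS/measurable_indic.
- exact/measurable_EFinP/measurable_funTS/measurableT_comp.
move=> w _; rewrite lee_fin indicE /a dotpZl.
have [/set_mem bad_w|_] := boolP (w \in [set w | y0 * dotp v (fun i => x i w) <= 0]%R).
  by rewrite -expR0 ler_expR mulNr -mulrA oppr_ge0 mulr_ge0_le0.
exact: expR_ge0.
Qed.

End conditional_on_label.

Lemma gaussian_mixture_margin_gt0 (v : 'I_d -> R) (e : R) :
  (forall y0 : R, (y0 = 1 \/ y0 = -1)%R ->
    P (y @^-1` [set y0] `&` [set w | y0 * dotp v (fun i => x i w) <= 0]%R) <=
    (2^-1 * e)%:E)%E ->
  ((1 - e)%:E <= P [set w | 0 < y w * dotp v (fun i => x i w)]%R)%E.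
Proof.
move=> tail; set dot := fun w => dotp v (fun i => x i w).
have mdot : measurable_fun setT dot.
  by apply: measurable_dotp => i; exact: measurable_funPT.
have mbad y0 : measurable [set w | y0 * dot w <= 0]%R.
  rewrite -[X in measurable X]setTI.
  by apply: measurable_fun_le => //; exact: measurable_funM.
pose good y0 := y @^-1` [set y0] `\` [set w | y0 * dot w <= 0]%R.
have mgood y0 : measurable (good y0) by exact: measurableD.
have good_ge y0 : y0 = 1 \/ y0 = -1 -> ((2^-1 - 2^-1 * e)%:E <= P (good y0))%E.
  move=> y0_sign; rewrite measureD//; last by rewrite ltey_eq fin_num_measure.
  (* [measureD] sees [P] through its content structure: refold it for the label law. *)
  rewrite -[X in (_ <= X - _)%E]/(P (y @^-1` [set y0])) gaussian_mixture_label// EFinB.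
  exact: leeB (lexx _) (tail y0 y0_sign).
have good_sub : good 1 `|` good (-1) `<=` [set w | 0 < y w * dot w]%R.
  by move=> w [] [/= yw /negP]; rewrite -ltNge /= yw.
have good_disj : good 1 `&` good (-1) = set0.
  apply/seteqP; split => // w [[/= yw _] [/= yw' _]].
  by move: yw'; rewrite yw; lra.
have mS : measurable [set w | 0 < y w * dot w]%R.
  have -> : [set w | 0 < y w * dot w]%R = (fun w => y w * dot w)%R @^-1` `]0, +oo[.
    by apply/seteqP; split => w /=; rewrite in_itv /= andbT.
  rewrite -[X in measurable X]setTI.
  by apply: (measurable_funM (measurable_funPT y) mdot) => //; exact: measurable_itv.
apply: le_trans (le_measure _ _ _ good_sub); rewrite ?inE; last 2 first.
- exact: measurableU.
- exact: mS.
rewrite measureU//.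
apply: le_trans (leeD (good_ge 1 (or_introl erefl)) (good_ge (-1) (or_intror erefl))).
by rewrite -EFinD lee_fin; lra.
Qed.

End gaussian_mixture.

Theorem lemma2 (R : realType) (dT : measure_display) (T : measurableType dT)
    (P : probability T R) (d : nat) (theta : 'I_d -> R) (sigma : R)
    (xL : 'I_d -> {RV P >-> R}) (yL : {RV P >-> R})
    (v : 'I_d -> R) (tau : R) :
  l2norm theta = Num.sqrt d%:R ->
  0 < sigma ->
  gaussian_mixture P theta sigma xL yL ->
  l2norm v = 1 ->
  l2norm (fun i => v i - theta i / Num.sqrt d%:R) <= tau ->
  tau < Num.sqrt 2 ->
  ((1 - expR (- (d%:R * (1 - tau ^+ 2 / 2) ^+ 2) / (2 * sigma ^+ 2)))%:E
    <= P [set w | 0 < Num.sg (yL w * dotp v (fun i => xL i w)) * dotp v theta]%R)%E.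
Proof.
move=> theta_norm sigma_gt0 GM v_norm dist_le tau_lt.
set mu := dotp v theta; set c := 1 - tau ^+ 2 / 2.
have v_unit : \sum_i v i ^+ 2 = 1 by rewrite -sqr_l2norm v_norm expr1n.
have mu_ge : Num.sqrt d%:R * c <= mu :=
  dotp_ge_l2norm_dist _ _ _ theta_norm v_norm dist_le.
have c_gt0 : 0 < c.
  have tau_ge0 : 0 <= tau := le_trans (sqrtr_ge0 _) dist_le.
  have : tau ^+ 2 < Num.sqrt 2 ^+ 2 by rewrite ltr_pXn2r ?nnegrE ?sqrtr_ge0.
  by rewrite sqr_sqrtr// /c; lra.
have sc_gt0 : 0 < Num.sqrt d%:R * c.
  by rewrite mulr_gt0// sqrtr_gt0 ltr0n (l2norm_eq1_dim_gt0 _ v_norm).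
have mu_gt0 : 0 < mu := lt_le_trans sc_gt0 mu_ge.
have -> : [set w | 0 < Num.sg (yL w * dotp v (fun i => xL i w)) * mu] =
    [set w | 0 < yL w * dotp v (fun i => xL i w)].
  by apply/seteqP; split => w /=; rewrite pmulr_lgt0// sgr_gt0.
apply: (gaussian_mixture_margin_gt0 GM) => y0 y0_sign.
apply: le_trans (gaussian_mixture_tail GM y0_sign _ v_unit sigma_gt0 (ltW mu_gt0)) _.
rewrite lee_fin ler_pM2l ?invr_gt0// ler_expR !mulNr lerN2 -/mu.
rewrite ler_pM2r ?invr_gt0 ?mulr_gt0 ?exprn_gt0//.
rewrite -[X in X * _](sqr_sqrtr (ler0n R d)) -exprMn.
by rewrite lerXn2r ?nnegrE ?(ltW sc_gt0) ?(ltW mu_gt0).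
Qed.
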